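(* Let $G'$ be a graph with a spanning tree $T'$; colour the edges of $T'$ green and all other edges of $G'$ black. Suppose $G$ with green edge set $E(T)$ is obtained from $G'$ with this colouring by a Tutte-extension or a diamond-extension. Then $T$ is a spanning tree of $G$, and $G-E(T)$ can be decomposed into a (possibly empty) 2-regular graph and a (possibly empty) matching if and only if $G'-E(T')$ can.
   Context: All graphs are finite and simple. Tutte-extension: choose two distinct green edges $x_uy_u$ and $x_vy_v$ (possibly sharing an end); subdivide the first by a new vertex $u$ and the second by a new vertex $v$, the four resulting edges being green, and add a new black edge $uv$. Diamond-extension: choose a green edge $xy$, delete it, add new vertices $d_1,d_2,d_3,d_4$ with green edges $xd_1,d_1d_3,d_3d_2,d_2d_4,d_4y$ and black edges $d_1d_2,d_3d_4$. A decomposition of a graph is a partition of its edge set into the edge sets of the listed subgraphs. *)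

(* Vertices are natural numbers; a graph is a pair
   (V, E) with V : {fset nat} and E : {fset {fset nat}}, every edge being a
   2-element set [fset x; y] (x != y) of vertices in V. *)
From HB Require Import structures.
From mathcomp Require Import all_boot.
From mathcomp Require Import finmap.
Set Implicit Arguments. Unset Strict Implicit. Unset Printing Implicit Defensive.
Local Open Scope fset_scope.

Definition edge (x y : nat) : {fset nat} := [fset x; y].

Definition simple_graph (V : {fset nat}) (E : {fset {fset nat}}) : Prop :=
  forall e, e \in E -> exists x y, [/\ x != y, x \in V, y \in V & e = edge x y].

Definition adj (F : {fset {fset nat}}) : rel nat := fun x y => edge x y \in F.

Definition connected (V : {fset nat}) (F : {fset {fset nat}}) : Prop :=
  forall x y, x \in V -> y \in V ->
    exists p : seq nat, path (adj F) x p /\ last x p = y.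

Definition acyclic (F : {fset {fset nat}}) : Prop :=
  ~ exists c : seq nat, [/\ 3 <= size c, uniq c & cycle (adj F) c].

Definition spanning_tree (V : {fset nat}) (E T : {fset {fset nat}}) : Prop :=
  [/\ T `<=` E, connected V T & acyclic T].

Definition deg (F : {fset {fset nat}}) (v : nat) : nat :=
  #|` [fset e in F | v \in e] |.

Definition two_regular (F : {fset {fset nat}}) : Prop :=
  forall v, (exists2 e, e \in F & v \in e) -> deg F v = 2.

Definition matching (M : {fset {fset nat}}) : Prop :=
  forall e1 e2, e1 \in M -> e2 \in M -> e1 != e2 -> e1 `&` e2 = fset0.

Definition decomposable (E T : {fset {fset nat}}) : Prop :=
  exists F M : {fset {fset nat}},
    [/\ F `|` M = E `\` T, F `&` M = fset0, two_regular F & matching M].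

Definition tutte_extension (V' : {fset nat}) (E' T' : {fset {fset nat}})
    (V : {fset nat}) (E T : {fset {fset nat}}) : Prop :=
  exists xu yu xv yv u v : nat,
    [/\ [/\ edge xu yu \in T', edge xv yv \in T' & edge xu yu != edge xv yv],
        [/\ u \notin V', v \notin V' & u != v],
        V = V' `|` [fset u; v],
        E = (E' `\` [fset edge xu yu; edge xv yv])
              `|` [fset edge xu u; edge u yu; edge xv v; edge v yv; edge u v]
      & T = (T' `\` [fset edge xu yu; edge xv yv])
              `|` [fset edge xu u; edge u yu; edge xv v; edge v yv]].

Definition diamond_extension (V' : {fset nat}) (E' T' : {fset {fset nat}})
    (V : {fset nat}) (E T : {fset {fset nat}}) : Prop :=
  exists x y d1 d2 d3 d4 : nat,
    [/\ edge x y \in T',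
        [/\ d1 \notin V', d2 \notin V', d3 \notin V' & d4 \notin V'],
        uniq [:: d1; d2; d3; d4] /\
        V = V' `|` [fset d1; d2; d3; d4],
        E = (E' `\` [fset edge x y])
              `|` [fset edge x d1; edge d1 d3; edge d3 d2; edge d2 d4;
                        edge d4 y; edge d1 d2; edge d3 d4]
      & T = (T' `\` [fset edge x y])
              `|` [fset edge x d1; edge d1 d3; edge d3 d2; edge d2 d4; edge d4 y]].

From mathcomp Require Import all_boot.
From mathcomp Require Import finmap.
Set Implicit Arguments. Unset Strict Implicit. Unset Printing Implicit Defensive.
Local Open Scope fset_scope.

(* Both extensions first subdivide green edges by new vertices (the Tutte-extension
   two distinct edges once each, the diamond-extension the edge xy four times in a
   row, turning it into the path x d1 d3 d2 d4 y) and then add black edges between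
   new vertices.  Subdividing an edge of a spanning tree by a new vertex w gives a
   spanning tree: a cycle through w enters and leaves it through the ends of the
   subdivided edge, and short-cutting it gives a cycle of the old tree.  It also
   leaves the black edges unchanged.  The added black edges are not green (for the
   diamond, d1d2 and d3d4 would close the triangles d1d3d2 and d3d2d4 of green
   edges), form a matching, and meet no other black edge; so each of them has an end
   of black degree one, lies in no 2-regular subgraph, and can be moved into or out
   of the matching of any decomposition. *)

Lemma in_edge a x y : (a \in edge x y) = (a == x) || (a == y).
Proof. by rewrite !inE. Qed.

Lemma edge_sym x y : edge x y = edge y x.
Proof. by rewrite /edge fsetUC. Qed.

Lemma eq_edge a b c d :
  (edge a b == edge c d) = (a == c) && (b == d) || (a == d) && (b == c).
Proof.
apply/eqP/idP => [Eab|]; last first.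
  by case/orP => /andP[/eqP-> /eqP->]; rewrite // edge_sym.
have mem z : (z \in edge a b) = (z \in edge c d) by rewrite Eab.
have := mem c; have := mem d; have := mem a; have := mem b.
rewrite !in_edge !eqxx ?orbT /= => /esym/orP[]/eqP-> /esym/orP[]/eqP->;
  by rewrite !eqxx ?orbT //= ?andbT ?orbb (eq_sym d c).
Qed.

Lemma eq_edge_notinl (e : {fset nat}) a b : a \notin e -> (e == edge a b) = false.
Proof. by apply: contraNF => /eqP->; rewrite in_edge eqxx. Qed.

Lemma eq_edge_notinr (e : {fset nat}) a b : b \notin e -> (e == edge a b) = false.
Proof. by rewrite edge_sym; apply: eq_edge_notinl. Qed.

Lemma edge_pair a b x y :
  (a == x) || (a == y) -> (b == x) || (b == y) -> a != b -> edge a b = edge x y.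
Proof. by case/orP => /eqP-> /orP[]/eqP->; rewrite ?eqxx // edge_sym. Qed.

Lemma adj_sym F : symmetric (adj F).
Proof. by move=> x y; rewrite /adj edge_sym. Qed.

Lemma simple_graph_sub V E F : F `<=` E -> simple_graph V E -> simple_graph V F.
Proof. by move=> FE sgE e /(fsubsetP FE); apply: sgE. Qed.

Lemma simple_graph_edge V E x y :
  simple_graph V E -> edge x y \in E -> [/\ x \in V, y \in V & x != y].
Proof.
move=> sgE /sgE[a [b [ab aV bV /eqP]]]; rewrite eq_edge.
by case/orP => /andP[/eqP-> /eqP->]; rewrite // eq_sym.
Qed.

Lemma simple_graph_fresh V E w (e : {fset nat}) :
  simple_graph V E -> w \notin V -> e \in E -> w \notin e.
Proof.
move=> sgE wV /sgE[a [b [_ aV bV ->]]].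
by rewrite in_edge negb_or; apply/andP; split; apply: contraNneq wV => ->.
Qed.

Lemma simple_graph_fresh_edge V E w a :
  simple_graph V E -> w \notin V -> edge w a \notin E.
Proof.
by move=> sgE wV; apply: contraL (simple_graph_fresh sgE wV) _; rewrite in_edge eqxx.
Qed.

Lemma notin_fresh_edge (V : {fset nat}) a u v :
  a \in V -> u \notin V -> v \notin V -> a \notin edge u v.
Proof.
move=> aV uV vV; rewrite in_edge negb_or.
by apply/andP; split; [apply: contraNneq uV | apply: contraNneq vV] => <-.
Qed.

Lemma fresh_edge_disjoint V E a b (e : {fset nat}) :
  simple_graph V E -> a \notin V -> b \notin V -> e \in E -> edge a b `&` e = fset0.
Proof.
move=> sgE aV bV eE; apply/eqP; rewrite fsetI_eq0; apply/fdisjointP => z.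
by rewrite in_edge => /orP[]/eqP->; apply: simple_graph_fresh sgE _ eE.
Qed.

Definition subdivide (F : {fset {fset nat}}) (x y w : nat) : {fset {fset nat}} :=
  (F `\ edge x y) `|` [fset edge x w; edge w y].

Lemma simple_graph_subdivide V E x y w :
  simple_graph V E -> edge x y \in E -> w \notin V ->
  simple_graph (w |` V) (subdivide E x y w).
Proof.
move=> sgE xyE wV; have [xV yV _] := simple_graph_edge sgE xyE.
have [wx wy] : w != x /\ w != y by split; apply: contraNneq wV => ->.
move=> e; rewrite !inE => /orP[/andP[_ /sgE[a [b [ab aV bV ->]]]]|/orP[]/eqP->].
- by exists a, b; rewrite !inE aV bV !orbT.
- by exists x, w; rewrite !inE eqxx xV orbT eq_sym.
- by exists w, y; rewrite !inE eqxx yV orbT.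
Qed.

Definition reach (F : {fset {fset nat}}) (x y : nat) : Prop :=
  exists p, path (adj F) x p /\ last x p = y.

Lemma reach_adj F x y : adj F x y -> reach F x y.
Proof. by move=> xy; exists [:: y]; rewrite /= xy. Qed.

Lemma reach_trans F x y z : reach F x y -> reach F y z -> reach F x z.
Proof.
move=> [p [xp <-]] [q [yq <-]]; exists (p ++ q).
by rewrite cat_path xp yq last_cat.
Qed.

Lemma reach_lift F F' x y :
  (forall a b, adj F a b -> reach F' a b) -> reach F x y -> reach F' x y.
Proof.
move=> lift [p [+ <-]]; elim: p x => [|b p IHp] x /=; first by exists [::].
by case/andP => /lift xb /IHp; apply: reach_trans.
Qed.

Lemma connected_subdivide V T x y w :
  connected V T -> x \in V -> edge x y \in T -> connected (w |` V) (subdivide T x y w).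
Proof.
move=> conT xV xyT; set T' := subdivide T x y w.
have xw : adj T' x w by rewrite /adj !inE eqxx orbT.
have wy : adj T' w y by rewrite /adj !inE eqxx !orbT.
have lift a b : adj T a b -> reach T' a b.
  rewrite {1}/adj => ab; have [/eqP|ne] := eqVneq (edge a b) (edge x y).
    rewrite eq_edge => /orP[]/andP[/eqP-> /eqP->].
      exact: reach_trans (reach_adj xw) (reach_adj wy).
    by apply: (@reach_trans _ _ w); apply: reach_adj; rewrite adj_sym.
  by apply: reach_adj; rewrite /adj !inE ne ab.
have hub z : z \in w |` V -> reach T' z x /\ reach T' x z.
  rewrite !inE => /orP[/eqP->|zV]; first by split; apply: reach_adj; rewrite // adj_sym.
  by split; apply: reach_lift lift _; apply: conT.
by move=> a b /hub[ax _] /hub[_ xb]; apply: reach_trans ax xb.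
Qed.

Lemma acyclic_subdivide T x y w :
  acyclic T -> edge x y \in T -> (forall e, e \in T -> w \notin e) ->
  acyclic (subdivide T x y w).
Proof.
move=> acT xyT wT [c [c3 uc cc]]; set T' := subdivide T x y w.
have wxy := wT _ xyT.
have [wx wy] : w != x /\ w != y by move: wxy; rewrite in_edge negb_or => /andP.
have T'T : {in predC1 w &, subrel (adj T') (adj T)}.
  move=> a b; rewrite !inE => aw bw.
  have wab : w \notin edge a b by rewrite in_edge negb_or !(eq_sym w) aw bw.
  by rewrite /adj /T' !inE (eq_edge_notinl _ wab) (eq_edge_notinr _ wab) !orbF => /andP[].
have nbr a : adj T' w a -> (a == x) || (a == y).
  have waT : (edge w a \in T) = false by apply/negbTE/negP => /wT; rewrite in_edge eqxx.
  by rewrite /adj /T' !inE waT andbF !eq_edge eqxx (negbTE wx) (negbTE wy) /= orbF.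
have xyT' : ~~ adj T' x y.
  by rewrite /adj /T' !inE eqxx (eq_edge_notinl _ wxy) (eq_edge_notinr _ wxy).
have [wc|wNc] := boolP (w \in c); last first.
  apply: acT; exists c; split => //; apply: (sub_in_cycle T'T) cc.
  by apply/allP => z zc; apply: contraNneq wNc => <-.
(* Rotate c to w :: a :: q: the neighbours a and last a q of w are x and y, so
   a :: q closes up through the old edge xy into a cycle of T. *)
case: (rot_to wc) => i p rot_c.
have : uniq (w :: p) by rewrite -rot_c rot_uniq.
have : cycle (adj T') (w :: p) by rewrite -rot_c rot_cycle.
have : 2 <= size p by move: c3; rewrite -(size_rot i) rot_c.
case: p {rot_c} => [//|a q] /= q_gt0 /andP[wa]; rewrite rcons_path => /andP[aq bw].
rewrite inE negb_or => /andP[/andP[wa' wNq] /andP[aNq uq]].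
have bq : last a q \in q by case: q q_gt0 {aq bw wNq aNq uq} => // b q _; apply: mem_last.
have ab : a != last a q by apply: contraNneq aNq => ->.
have Eba : edge (last a q) a = edge x y.
  by apply: edge_pair; [apply: nbr; rewrite adj_sym | apply: nbr | rewrite eq_sym].
(* Unless c is the triangle x w y, whose side xy is no longer an edge. *)
have [q1|qN1] := eqVneq (size q) 1.
  case: q q1 aq Eba {q_gt0 bw wNq aNq uq bq ab} => [|b []] //= _.
  by rewrite andbT => ab Eba; move: xyT'; rewrite /adj -Eba edge_sym => /negP[].
apply: acT; exists (a :: q); split; first by rewrite /= ltnS ltn_neqAle eq_sym qN1.
  exact/andP.
rewrite /cycle rcons_path {2}/adj Eba xyT andbT.
apply: (sub_in_path T'T) aq; apply/allP => z; rewrite inE => /orP[/eqP->|zq] /=.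
  by rewrite eq_sym.
by apply: contraNneq wNq => <-.
Qed.

Lemma fsetD_replace (K : choiceType) (E T G : {fset K}) e :
  e \in T -> [disjoint G & E] -> ((E `\ e) `|` G) `\` ((T `\ e) `|` G) = E `\` T.
Proof.
move=> eT /fdisjointP GE; apply/fsetP => f; rewrite !inE.
have [fG|_] := boolP (f \in G); first by rewrite !orbT (negbTE (GE f fG)) andbF.
by rewrite !orbF; have [->|] := eqVneq f e; rewrite ?eT.
Qed.

Lemma subdivide_spanning_tree V E T x y w :
  simple_graph V E -> spanning_tree V E T -> edge x y \in T -> w \notin V ->
  [/\ simple_graph (w |` V) (subdivide E x y w),
      spanning_tree (w |` V) (subdivide E x y w) (subdivide T x y w)
    & subdivide E x y w `\` subdivide T x y w = E `\` T].
Proof.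
move=> sgE [TE conT acT] xyT wV; have xyE := fsubsetP TE _ xyT.
have [xV _ _] := simple_graph_edge sgE xyE.
have wE e : e \in E -> w \notin e by apply: simple_graph_fresh sgE wV.
split; first exact: simple_graph_subdivide.
  split; first exact/fsetSU/fsetSD.
    exact: connected_subdivide.
  by apply: acyclic_subdivide => // e /(fsubsetP TE) /wE.
apply: fsetD_replace => //; rewrite fdisjointU1X fdisjoint1X.
by apply/andP; split; apply: contraL (wE _) _; rewrite in_edge eqxx ?orbT.
Qed.

Fixpoint subdivide_path (F : {fset {fset nat}}) (x y : nat) (ws : seq nat) :=
  if ws is w :: ws' then subdivide_path (subdivide F x y w) w y ws' else F.

Lemma mem_subdivider F x y w : edge w y \in subdivide F x y w.
Proof. by rewrite !inE eqxx !orbT. Qed.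

Lemma subdivide_path_spanning_tree ws V E T x y :
  simple_graph V E -> spanning_tree V E T -> edge x y \in T ->
  uniq ws -> all (fun w => w \notin V) ws ->
  spanning_tree (foldl (fun V w => w |` V) V ws) (subdivide_path E x y ws) (subdivide_path T x y ws)
  /\ subdivide_path E x y ws `\` subdivide_path T x y ws = E `\` T.
Proof.
elim: ws V E T x => [|w ws IHws] V E T x sgE stT xyT //= /andP[wNws uws] /andP[wV wsV].
have [sg1 st1 ET1] := subdivide_spanning_tree sgE stT xyT wV.
rewrite -ET1; apply: IHws sg1 st1 (mem_subdivider _ _ _ _) uws _.
by apply/allP => z zws; rewrite !inE negb_or (allP wsV _ zws) andbT; apply: contraNneq wNws => <-.
Qed.

Definition decomposable_set (D : {fset {fset nat}}) : Prop :=
  exists F M : {fset {fset nat}},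
    [/\ F `|` M = D, F `&` M = fset0, two_regular F & matching M].

Lemma decomposable_set_isolated (D N : {fset {fset nat}}) :
  matching N -> fset0 \notin N ->
  (forall e e', e \in N -> e' \in D -> e `&` e' = fset0) ->
  decomposable_set (D `|` N) <-> decomposable_set D.
Proof.
move=> mN N0 isoN.
have ND e : e \in N -> e \notin D.
  by move=> eN; apply: contraNN N0 => eD; rewrite -(isoN _ _ eN eD) fsetIid.
split=> [[F [M [FM FM0 regF mM]]]|[F [M [FM FM0 regF mM]]]].
  have FN e : e \in F -> e \notin N.
    move=> eF; apply/negP => eN; have /fset0Pn[v ve] : e != fset0.
      by apply: contraNneq N0 => <-.
    have : deg F v <= 1.
      rewrite /deg -(cardfs1 e); apply/fsubset_leq_card/fsubsetP => e'.
      rewrite !inE => /andP[e'F ve']; apply/eqP.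
      have : e' \in D `|` N by rewrite -FM inE e'F.
      rewrite inE => /orP[e'D|e'N].
        by have /fsetP/(_ v) := isoN _ _ eN e'D; rewrite !inE ve ve'.
      apply: contraTeq isT => ne; have /fsetP/(_ v) := mN _ _ e'N eN ne.
      by rewrite !inE ve ve'.
    by rewrite regF //; exists e.
  exists F, (M `\` N); split => //.
  - apply/fsetP => e; move/fsetP/(_ e): FM; rewrite !inE.
    have [eN|eNN] := boolP (e \in N).
      by rewrite (negbTE (ND e eN)) (negbTE (contraL (FN e) eN)) orbT.
    by rewrite !orbF.
  - apply/eqP; rewrite fsetI_eq0 (fdisjointWr (fsubsetDl _ _)) //.
    by rewrite -fsetI_eq0 FM0.
  - by move=> e1 e2; rewrite !inE => /andP[_ e1M] /andP[_ e2M]; apply: mM.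
exists F, (M `|` N); split => //.
- by rewrite fsetUA FM.
- rewrite fsetIUr FM0 fset0U; apply/eqP; rewrite fsetI_eq0; apply/fdisjointP => e.
  by move=> eF; apply: contraL (ND e) _; rewrite -FM inE eF.
- have MD e : e \in M -> e \in D by rewrite -FM inE => ->; rewrite orbT.
  move=> e1 e2; rewrite !inE => /orP[e1M|e1N] /orP[e2M|e2N] ne.
  + exact: mM.
  + by rewrite fsetIC isoN ?MD.
  + by rewrite isoN ?MD.
  + exact: mN.
Qed.

Lemma edge_neq0 x y : edge x y != fset0.
Proof. by apply/fset0Pn; exists x; rewrite in_edge eqxx. Qed.

Lemma add_fresh_matching V' E' T' V E T N :
  simple_graph V' E' -> spanning_tree V E T -> E `\` T = E' `\` T' -> matching N ->
  (forall e, e \in N -> exists a b, [/\ a \notin V', b \notin V' & e = edge a b]) ->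
  [disjoint N & T] ->
  spanning_tree V (E `|` N) T /\ (decomposable (E `|` N) T <-> decomposable E' T').
Proof.
move=> sgE [TE conT acT] ET mN freshN NT; split.
  by split => //; apply: fsubset_trans TE (fsubsetUl _ _).
rewrite /decomposable fsetDUl (fsetDidPl _ _ NT) ET.
apply: decomposable_set_isolated => //.
  by apply/negP => /freshN[a [b [_ _ ab0]]]; move: (edge_neq0 a b); rewrite -ab0 eqxx.
by move=> e e' /freshN[a [b [aV bV ->]]] /[1!inE] /andP[_]; apply: fresh_edge_disjoint sgE aV bV.
Qed.

Lemma subdivide2E F x1 y1 w1 x2 y2 w2 :
  edge x2 y2 \notin [fset edge x1 w1; edge w1 y1] ->
  subdivide (subdivide F x1 y1 w1) x2 y2 w2 =
  (F `\` [fset edge x1 y1; edge x2 y2])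
    `|` [fset edge x1 w1; edge w1 y1; edge x2 w2; edge w2 y2].
Proof.
rewrite !inE negb_or => /andP[ne1 ne2]; apply/fsetP => e; rewrite !inE.
have [->|ne] := eqVneq e (edge x2 y2); first by rewrite orbT (negbTE ne1) (negbTE ne2).
by rewrite !orbF !orbA.
Qed.

Lemma tutte_extension_invariant V' E' T' V E T :
  simple_graph V' E' -> spanning_tree V' E' T' -> tutte_extension V' E' T' V E T ->
  spanning_tree V E T /\ (decomposable E T <-> decomposable E' T').
Proof.
move=> sgE stT [xu [yu [xv [yv [u [v [[e1T e2T ne12] [uV vV uv] -> -> ->]]]]]]].
have [TE _ _] := stT; have sgT := simple_graph_sub TE sgE.
have [xuV yuV _] := simple_graph_edge sgT e1T.
have [xvV yvV _] := simple_graph_edge sgT e2T.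
have uNe2 : u \notin edge xv yv := simple_graph_fresh sgT uV e2T.
have e2T1 : edge xv yv \in subdivide T' xu yu u by rewrite !inE eq_sym ne12 e2T.
have vV1 : v \notin u |` V' by rewrite !inE negb_or eq_sym uv.
have [sgE1 stT1 ET1] := subdivide_spanning_tree sgE stT e1T uV.
have [_ stT2 ET2] := subdivide_spanning_tree sgE1 stT1 e2T1 vV1.
have sub2E F : subdivide (subdivide F xu yu u) xv yv v =
    (F `\` [fset edge xu yu; edge xv yv]) `|` [fset edge xu u; edge u yu; edge xv v; edge v yv].
  by apply: subdivide2E; rewrite !inE (eq_edge_notinr _ uNe2) (eq_edge_notinl _ uNe2).
have uvT : [disjoint [fset edge u v] & subdivide (subdivide T' xu yu u) xv yv v].
  rewrite fdisjoint1X sub2E !inE (negbTE (simple_graph_fresh_edge _ sgT uV)) andbF.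
  have old a : a \in V' -> a \notin edge u v by move=> aV; apply: notin_fresh_edge aV uV vV.
  by rewrite (eq_edge_notinl _ (old _ xuV)) (eq_edge_notinr _ (old _ yuV))
    (eq_edge_notinl _ (old _ xvV)) (eq_edge_notinr _ (old _ yvV)).
have -> : V' `|` [fset u; v] = v |` (u |` V').
  by apply/fsetP => z; rewrite !inE orbC orbCA -orbA.
have -> : (E' `\` [fset edge xu yu; edge xv yv])
    `|` [fset edge xu u; edge u yu; edge xv v; edge v yv; edge u v] =
    subdivide (subdivide E' xu yu u) xv yv v `|` [fset edge u v] by rewrite sub2E fsetUA.
rewrite -sub2E; apply: add_fresh_matching sgE stT2 _ _ _ uvT.
- by rewrite ET2 ET1.
- by move=> e1 e2; rewrite !inE => /eqP-> /eqP->; rewrite eqxx.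
- by move=> e; rewrite inE => /eqP->; exists u, v.
Qed.

Lemma subdivide_endE (A : {fset {fset nat}}) a w y z :
  edge w y \notin A -> a != y ->
  subdivide (A `|` [fset edge a w; edge w y]) w y z =
  (A `|` [fset edge a w]) `|` [fset edge w z; edge z y].
Proof.
move=> wyA ay; congr (_ `|` _); apply/fsetP => e; rewrite !inE.
have [->|_] := eqVneq e (edge w y); last by rewrite orbF.
rewrite (negbTE wyA) eq_edge eqxx (eq_sym y a) (negbTE ay) /= orbF.
by apply/esym/negbTE; apply: contra ay => /andP[/eqP-> /eqP->].
Qed.

Lemma subdivide_path4E F x y d1 d3 d2 d4 :
  x != y -> d1 != y -> d3 != y ->
  edge d1 y \notin F -> edge d3 y \notin F -> edge d2 y \notin F ->
  subdivide_path F x y [:: d1; d3; d2; d4] =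
  (F `\ edge x y) `|` [fset edge x d1; edge d1 d3; edge d3 d2; edge d2 d4; edge d4 y].
Proof.
move=> xy d1y d3y /negbTE d1F /negbTE d3F /negbTE d2F.
have [yx yd1 yd3] : [/\ y != x, y != d1 & y != d3] by rewrite !(eq_sym y).
rewrite /= [subdivide _ d1 y d3]subdivide_endE ?[subdivide _ d3 y d2]subdivide_endE
  ?[subdivide _ d2 y d4]subdivide_endE; first by apply/fsetP => e; rewrite !inE !orbA.
all: by rewrite ?inE ?d1F ?d2F ?d3F ?eq_edge ?(negbTE yx) ?(negbTE yd1) ?(negbTE yd3) ?andbF.
Qed.

Lemma acyclic_triangle F a b c :
  acyclic F -> uniq [:: a; b; c] -> adj F a b -> adj F b c -> edge a c \notin F.
Proof.
move=> acF abc ab bc; apply/negP => ac; apply: acF; exists [:: a; b; c].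
by split => //=; rewrite ab bc /adj edge_sym ac.
Qed.

Lemma diamond_extension_invariant V' E' T' V E T :
  simple_graph V' E' -> spanning_tree V' E' T' -> diamond_extension V' E' T' V E T ->
  spanning_tree V E T /\ (decomposable E T <-> decomposable E' T').
Proof.
move=> sgE stT [x [y [d1 [d2 [d3 [d4 [xyT [d1V d2V d3V d4V] [ud ->] -> ->]]]]]]].
move: ud; rewrite /= !inE !negb_or => /and4P[/and3P[d12 d13 d14] /andP[d23 d24] d34 _].
have [TE _ _] := stT; have sgT := simple_graph_sub TE sgE.
have [_ yV xy] := simple_graph_edge sgT xyT.
have [d1y d3y] : d1 != y /\ d3 != y.
  by split; [apply: contraNneq d1V | apply: contraNneq d3V] => ->.
have sub4E F : simple_graph V' F -> subdivide_path F x y [:: d1; d3; d2; d4] =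
    (F `\ edge x y) `|` [fset edge x d1; edge d1 d3; edge d3 d2; edge d2 d4; edge d4 y].
  by move=> sgF; apply: subdivide_path4E => //; apply: (simple_graph_fresh_edge _ sgF).
have [] := subdivide_path_spanning_tree (ws := [:: d1; d3; d2; d4]) sgE stT xyT.
- by rewrite /= !inE !negb_or d13 d12 d14 d34 d24 eq_sym d23.
- by rewrite /= d1V d2V d3V d4V.
rewrite (sub4E _ sgE) (sub4E _ sgT) /= => st4 ET4.
have NT : [disjoint [fset edge d1 d2; edge d3 d4] &
    (T' `\ edge x y) `|` [fset edge x d1; edge d1 d3; edge d3 d2; edge d2 d4; edge d4 y]].
  have [_ _ acT4] := st4; rewrite fdisjointU1X fdisjoint1X; apply/andP; split.
    apply: (@acyclic_triangle _ d1 d3 d2 acT4); rewrite /= /adj !inE ?negb_or ?eqxx ?orbT //.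
    by rewrite d13 d12 eq_sym d23.
  apply: (@acyclic_triangle _ d3 d2 d4 acT4); rewrite /= /adj !inE ?negb_or ?eqxx ?orbT //.
  by rewrite eq_sym d23 d34 d24.
have -> : V' `|` [fset d1; d2; d3; d4] = d4 |` (d2 |` (d3 |` (d1 |` V'))).
  apply/fsetP => z; rewrite !inE.
  by case: (z \in V'); case: (z == d1); case: (z == d2); case: (z == d3); case: (z == d4).
have -> : (E' `\ edge x y) `|`
    [fset edge x d1; edge d1 d3; edge d3 d2; edge d2 d4; edge d4 y; edge d1 d2; edge d3 d4] =
    ((E' `\ edge x y) `|` [fset edge x d1; edge d1 d3; edge d3 d2; edge d2 d4; edge d4 y])
    `|` [fset edge d1 d2; edge d3 d4] by apply/fsetP => e; rewrite !inE !orbA.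
apply: add_fresh_matching sgE st4 ET4 _ _ NT.
- have N12 : edge d1 d2 `&` edge d3 d4 = fset0.
    apply/eqP; rewrite fsetI_eq0; apply/fdisjointP => z.
    by rewrite !in_edge !negb_or => /orP[]/eqP->; rewrite ?d13 ?d14 ?d23 ?d24.
  move=> e1 e2; rewrite !inE => /orP[]/eqP-> /orP[]/eqP->; rewrite ?eqxx // => _.
  by rewrite fsetIC.
- by move=> e; rewrite !inE => /orP[]/eqP->; [exists d1, d2 | exists d3, d4].
Qed.

Theorem lemma10 (V' : {fset nat}) (E' T' : {fset {fset nat}})
    (V : {fset nat}) (E T : {fset {fset nat}}) :
  simple_graph V' E' ->
  spanning_tree V' E' T' ->
  tutte_extension V' E' T' V E T \/ diamond_extension V' E' T' V E T ->
  spanning_tree V E T /\ (decomposable E T <-> decomposable E' T').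
Proof.
move=> sgE stT [ext|ext].
  exact: tutte_extension_invariant ext.
exact: diamond_extension_invariant ext.
Qed.
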